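(* Let $n\ge 1$ and let $f$ be the $n$-ary operation on $\mathbb{Z}_8$ given by $f(\mathbf{x})=x_1x_2\cdots x_n\sum_{\alpha\in I_n}b_\alpha\mathbf{x}^\alpha$, where every $b_\alpha\in\mathbb{Z}_8$ is even. Then $f$ preserves the relation $Z$.
   Context: $I_n$ is the set of all $n$-tuples $\alpha\in\{0,1,2\}^n$ with at most two nonzero components, and $\mathbf{x}^\alpha=x_1^{\alpha_1}\cdots x_n^{\alpha_n}$. $P_4$ is the power set of $\{1,2,3,4\}$. For $A\in P_4$, $\mathbf{g}^A\in\mathbb{Z}_8^{P_4}$ is the tuple with $B$-component $1$ if $A\subseteq B$ and $0$ otherwise. Every $\mathbf{u}\in\mathbb{Z}_8^{P_4}$ has a unique expression $\mathbf{u}=\sum_{A\in P_4}a_A\mathbf{g}^A$ with $a_A\in\mathbb{Z}_8$. $Z\subseteq \mathbb{Z}_8^{P_4}$ (a $16$-ary relation) consists of all $\mathbf{u}$ whose coefficients satisfy: (Z1) $a_{\{2\}}\equiv 2a_{\{1\}}\pmod 4$ and $a_{\{4\}}\equiv 2a_{\{3\}}\pmod 4$; (Z2) $a_A\equiv 0\pmod 2$ whenever $|A|\ge 2$; (Z3) $a_A\equiv 0\pmod 4$ whenever $|A|\ge 2$ and $A\cap\{2,4\}\neq\emptyset$; (Z4) $a_A=0$ whenever $\{2,4\}\subseteq A$. An $n$-ary operation $f$ preserves $Z$ if applying $f$ componentwise to any $\mathbf{u}^{(1)},\dots,\mathbf{u}^{(n)}\in Z$ yields an element of $Z$. *)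

From mathcomp Require Import all_boot all_order all_algebra.
Set Implicit Arguments. Unset Strict Implicit. Unset Printing Implicit Defensive.
Import GRing.Theory.
Local Open Scope ring_scope.

Notation Z8 := 'Z_8.

(* P_4 = power set of {1,2,3,4}; element k is represented by the ordinal k-1. *)
Notation P4 := {set 'I_4}.

Definition e1 : 'I_4 := inord 0.
Definition e2 : 'I_4 := inord 1.
Definition e3 : 'I_4 := inord 2.
Definition e4 : 'I_4 := inord 3.

Definition gvec (A : P4) : {ffun P4 -> Z8} :=
  [ffun B : P4 => if A \subset B then 1 else 0].

Definition Zcoef (a : P4 -> Z8) : Prop :=
  [/\
      (val (a [set e2]) = 2 * val (a [set e1]) %[mod 4])%N /\
      (val (a [set e4]) = 2 * val (a [set e3]) %[mod 4])%N,
      (forall A : P4, (2 <= #|A|)%N -> (2 %| val (a A))%N),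
      (forall A : P4, (2 <= #|A|)%N -> A :&: [set e2; e4] != set0 ->
         (4 %| val (a A))%N)
    &
      (forall A : P4, [set e2; e4] \subset A -> a A = 0)].

(* Z : u is in Z iff its (unique) coefficients satisfy (Z1)-(Z4) *)
Definition Zrel (u : {ffun P4 -> Z8}) : Prop :=
  exists a : P4 -> Z8, (forall B : P4, u B = \sum_(A : P4) a A * gvec A B) /\ Zcoef a.

Definition preservesZ (n : nat) (f : ('I_n -> Z8) -> Z8) : Prop :=
  forall u : 'I_n -> {ffun P4 -> Z8},
    (forall i, Zrel (u i)) -> Zrel [ffun B => f (fun i => u i B)].

Definition In_set (n : nat) (alpha : {ffun 'I_n -> 'I_3}) : bool :=
  (#|[set i | alpha i != ord0]| <= 2)%N.

Definition monom (n : nat) (alpha : {ffun 'I_n -> 'I_3}) (x : 'I_n -> Z8) : Z8 :=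
  \prod_(i < n) x i ^+ alpha i.

From mathcomp Require Import all_boot all_order all_algebra zify ring.
Import GRing.Theory.
Set Implicit Arguments. Unset Strict Implicit. Unset Printing Implicit Defensive.
Local Open Scope ring_scope.

(* Weigh a subset A of P4 by w(A) = |A ∩ {2,4}|.  Conditions (Z1)-(Z4) say
   roughly that the coefficient a_A of an element of Z is 2 * 2^w(A) * t_A.
   Functions P4 -> Z_8 whose coefficients are divisible by 2^w(A) form a
   subring of the pointwise ring, because g^A g^A' = g^(A ∪ A') and w is
   subadditive.  Every element of Z lies in that subring, and twice any
   element of the subring lies in Z (2^3 = 0 in Z_8 takes care of (Z4)).
   Since f is 2 times a polynomial, it preserves Z; neither the factor
   x_1 ... x_n nor n >= 1 is needed. *)

Lemma prod_ffunE (aT : finType) (R : pzSemiRingType) (I : Type) (r : seq I)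
    (P : pred I) (F : I -> {ffun aT -> R}) x :
  (\prod_(i <- r | P i) F i) x = \prod_(i <- r | P i) F i x.
Proof. by elim/big_rec2: _ => // [|i _ y _ <-]; rewrite !ffunE. Qed.

Lemma exp_ffunE (aT : finType) (R : pzSemiRingType) (F : {ffun aT -> R}) k x :
  (F ^+ k) x = F x ^+ k.
Proof. by elim: k => [|k IHk]; rewrite ?expr0 ?ffunE // !exprS ffunE IHk. Qed.

Section WeightedSpan.

Variables (T : finType) (S : {set T}) (R : comPzRingType) (c : R).

Definition weight (A : {set T}) : nat := #|A :&: S|.

Lemma weight0 : weight set0 = 0%N.
Proof. by rewrite /weight set0I cards0. Qed.

Lemma weightU A A' : (weight (A :|: A') <= weight A + weight A')%N.
Proof. by rewrite /weight setIUl cardsU leq_subr. Qed.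

Lemma weight_le_card A : (weight A <= #|S|)%N.
Proof. exact/subset_leq_card/subsetIr. Qed.

Lemma weight_le_cardA A : (weight A <= #|A|)%N.
Proof. exact/subset_leq_card/subsetIl. Qed.

Lemma weight_gt0 A : (0 < weight A)%N = (A :&: S != set0).
Proof. by rewrite lt0n cards_eq0. Qed.

Lemma weight_eq_card A : (weight A == #|S|) = (S \subset A).
Proof.
apply/eqP/idP => [wA | /setIidPr SA]; last by rewrite /weight SA.
have /subset_leqif_cards := subsetIr A S.
by rewrite -/(weight A) wA => /leqif_refl/eqP <-; apply: subsetIl.
Qed.

Lemma weight_set1 x : weight [set x] = (x \in S).
Proof.
rewrite /weight; case: (boolP (x \in S)) => xS.
  by rewrite (setIidPl _) ?cards1 ?sub1set.
apply/eqP; rewrite cards_eq0; apply/eqP/setP => y.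
by rewrite !inE; case: eqP => // ->; rewrite (negbTE xS).
Qed.

Definition wterm (A : {set T}) (x : R) : {ffun {set T} -> R} :=
  [ffun B : {set T} => c ^+ weight A * x * (A \subset B)%:R].

Definition weighted_span (F : {ffun {set T} -> R}) : Prop :=
  exists t : {set T} -> R, F = \sum_A wterm A (t A).

Lemma wterm0 A : wterm A 0 = 0.
Proof. by apply/ffunP => B; rewrite !ffunE mulr0 mul0r. Qed.

Lemma wtermD A x y : wterm A (x + y) = wterm A x + wterm A y.
Proof. by apply/ffunP => B; rewrite !ffunE mulrDr mulrDl. Qed.

Lemma wtermM A A' x y :
  wterm A x * wterm A' y =
  wterm (A :|: A') (c ^+ (weight A + weight A' - weight (A :|: A')) * x * y).
Proof.
apply/ffunP => B; rewrite !ffunE subUset.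
rewrite !mulrA -exprD subnKC ?weightU // exprD.
by case: (A \subset B); case: (A' \subset B); rewrite ?mulr0 ?mul0r ?mulr1; ring.
Qed.

Lemma weighted_span_wterm A x : weighted_span (wterm A x).
Proof.
exists (fun C => if C == A then x else 0).
rewrite (bigD1 A) //= eqxx big1 ?addr0 // => C /negbTE ->.
exact: wterm0.
Qed.

Lemma weighted_span0 : weighted_span 0.
Proof. by exists (fun=> 0); rewrite big1 // => A _; rewrite wterm0. Qed.

Lemma weighted_spanD F G :
  weighted_span F -> weighted_span G -> weighted_span (F + G).
Proof.
move=> [t ->] [s ->]; exists (fun A => t A + s A).
by rewrite -big_split; apply: eq_bigr => A _; rewrite wtermD.
Qed.

Lemma weighted_span_sum (I : Type) (r : seq I) (P : pred I)
    (F : I -> {ffun {set T} -> R}) :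
  (forall i, P i -> weighted_span (F i)) ->
  weighted_span (\sum_(i <- r | P i) F i).
Proof. exact: big_ind weighted_span0 weighted_spanD _ _ _ _. Qed.

Lemma weighted_span_const x : weighted_span [ffun=> x].
Proof.
suff -> : [ffun=> x] = wterm set0 x by apply: weighted_span_wterm.
by apply/ffunP => B; rewrite !ffunE weight0 sub0set mul1r mulr1.
Qed.

Lemma weighted_spanM F G :
  weighted_span F -> weighted_span G -> weighted_span (F * G).
Proof.
move=> [t ->] [s ->]; rewrite mulr_suml.
apply: weighted_span_sum => A _; rewrite mulr_sumr.
by apply: weighted_span_sum => A' _; rewrite wtermM; apply: weighted_span_wterm.
Qed.

Lemma weighted_span_prod (I : Type) (r : seq I) (P : pred I)
    (F : I -> {ffun {set T} -> R}) :
  (forall i, P i -> weighted_span (F i)) ->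
  weighted_span (\prod_(i <- r | P i) F i).
Proof. exact: big_ind (weighted_span_const 1) weighted_spanM _ _ _ _. Qed.

Lemma weighted_spanX F k : weighted_span F -> weighted_span (F ^+ k).
Proof.
move=> spanF; elim: k => [|k IHk]; first exact: weighted_span_const.
by rewrite exprS; apply: weighted_spanM.
Qed.

End WeightedSpan.

Lemma Z8_evenP (x : Z8) : (2 %| val x)%N -> exists y : Z8, x = 2 * y.
Proof.
move=> x_even; exists (inZp (val x %/ 2)); apply: val_inj.
have : (val x < 8)%N by case: x {x_even} => v /= v_lt.
by rewrite /=; change (Zp_trunc 8).+2 with 8%N; move: x_even; lia.
Qed.

Lemma dvdn_val_Z8M (d : nat) (x y : Z8) :
  (d %| 8)%N -> (d %| val x)%N -> (d %| val (x * y)%R)%N.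
Proof.
move=> d8 dx; have -> : val (x * y)%R = (val x * val y %% 8)%N by [].
by rewrite /dvdn modn_dvdm // -/(dvdn d _) dvdn_mulr.
Qed.

Notation S24 := [set e2; e4].
Notation Zspan := (weighted_span S24 (2 : Z8)).

Lemma card_S24 : #|S24| = 2%N.
Proof. by rewrite cards2 -val_eqE /= !inordK. Qed.

Lemma Zcoef_weight1_even (a : P4 -> Z8) A :
  Zcoef a -> weight S24 A = 1%N -> (2 %| val (a A))%N.
Proof.
case=> [[Z1a Z1b] _ Z3 _] wA.
have [A_ge2 | A_lt2] := leqP 2 #|A|.
  have := Z3 A A_ge2; rewrite -weight_gt0 wA => /(_ isT); lia.
have /cards1P [x A1] : #|A| == 1%N.
  by have := weight_le_cardA S24 A; rewrite wA; lia.
have : x \in S24 by move: wA; rewrite A1 weight_set1; case: (x \in S24).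
by rewrite A1 !inE => /orP [] /eqP ->; [move: Z1a | move: Z1b]; lia.
Qed.

Lemma Zcoef_weight_dvd (a : P4 -> Z8) A :
  Zcoef a -> exists t : Z8, a A = 2 ^+ weight S24 A * t.
Proof.
move=> Za; have := weight_le_card S24 A; rewrite card_S24.
case wA: (weight S24 A) => [|[|[|//]]] _.
- by exists (a A); rewrite mul1r.
- by apply: Z8_evenP; apply: Zcoef_weight1_even wA.
- exists 0; rewrite mulr0; case: Za => _ _ _; apply.
  by rewrite -weight_eq_card card_S24 wA.
Qed.

Lemma Zrel_weighted_span (u : {ffun P4 -> Z8}) : Zrel u -> Zspan u.
Proof.
case=> a [ua /Zcoef_weight_dvd Za].
have [t ht] := fin_all_exists (fun A => Za A); exists t.
apply/ffunP => B; rewrite ua sum_ffunE; apply: eq_bigr => A _.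
by rewrite !ffunE ht; case: (A \subset B).
Qed.

Lemma weighted_span_Zrel (F : {ffun P4 -> Z8}) : Zspan F -> Zrel (2 * F).
Proof.
case=> t ->; exists (fun A => 2 ^+ (weight S24 A).+1 * t A); split.
  move=> B; rewrite !ffunE sum_ffunE mulr_sumr; apply: eq_bigr => A _.
  by rewrite !ffunE exprS; case: (A \subset B); rewrite ?mulr0 ?mulr1 ?mulrA.
have dvd2 k x : (2 %| val (2 ^+ k.+1 * x : Z8)%R)%N.
  by rewrite exprS -mulrA dvdn_val_Z8M.
have dvd4 k x : (4 %| val (2 ^+ k.+2 * x : Z8)%R)%N.
  by rewrite !exprS mulrA -mulrA dvdn_val_Z8M.
split.
- have [-> -> -> ->] : [/\ weight S24 [set e1] = 0, weight S24 [set e2] = 1,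
      weight S24 [set e3] = 0 & weight S24 [set e4] = 1]%N.
    by rewrite !weight_set1 !inE -!val_eqE /= !inordK.
  have mod4 p q : (4 %| p)%N -> (2 %| q)%N -> (p = 2 * q %[mod 4])%N by lia.
  by split; apply: mod4; [apply: dvd4 | apply: dvd2 | apply: dvd4 | apply: dvd2].
- by move=> A _; apply: dvd2.
- move=> A _; rewrite -weight_gt0.
  by case: (weight S24 A) => // k _; apply: dvd4.
- move=> A; rewrite -weight_eq_card card_S24 => /eqP ->.
  have -> : (2 : Z8) ^+ 3 = 0 by apply: val_inj.
  exact: mul0r.
Qed.

Theorem lemma3p6 (n : nat) (hn : (1 <= n)%N)
  (b : {ffun 'I_n -> 'I_3} -> 'Z_8)
  (hb : forall alpha, In_set alpha -> (2 %| val (b alpha))%N) :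
  preservesZ (fun x : 'I_n -> 'Z_8 =>
    (\prod_(i < n) x i) *
    \sum_(alpha : {ffun 'I_n -> 'I_3} | In_set alpha) b alpha * monom alpha x).
Proof.
move=> u Zu.
have b_half alpha : exists y : Z8, In_set alpha -> b alpha = 2 * y.
  have [/hb/Z8_evenP [y ->] | _] := boolP (In_set alpha); last by exists 0.
  by exists y.
have [b2 hb2] := fin_all_exists b_half.
have -> : [ffun B => (\prod_(i < n) u i B) *
    \sum_(alpha | In_set alpha) b alpha * monom alpha (fun i => u i B)]
  = 2 * ((\prod_(i < n) u i) *
    \sum_(alpha | In_set alpha) [ffun=> b2 alpha] * \prod_(i < n) u i ^+ alpha i).
  apply/ffunP => B; rewrite !ffunE sum_ffunE !prod_ffunE mulrCA.
  congr (_ * _); rewrite mulr_sumr; apply: eq_bigr => alpha /hb2 ->.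
  by rewrite !ffunE prod_ffunE /monom mulrA; under eq_bigr do rewrite exp_ffunE.
apply/weighted_span_Zrel/weighted_spanM.
  by apply: weighted_span_prod => i _; apply: Zrel_weighted_span.
apply: weighted_span_sum => alpha _; apply: weighted_spanM.
  exact: weighted_span_const.
by apply: weighted_span_prod => i _; apply/weighted_spanX/Zrel_weighted_span.
Qed.
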